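(* Let $M$ be an exact $\mathfrak{K}$-module. (a) If the $\mathfrak{S}$-module $(M_0,t_0)$ is cohomologically trivial, then $\operatorname{im}N(t_0)=\operatorname{im}\alpha_{01}=\ker\alpha_{20}=\ker(1-t_0)$ and $\operatorname{im}(1-t_0)=\operatorname{im}\alpha_{02}=\ker\alpha_{10}=\ker N(t_0)$. (b) If the $\mathfrak{S}$-module $(M_1,s_1)$ is cohomologically trivial, then $\operatorname{im}(1-s_1)=\operatorname{im}\alpha_{12}=\ker\alpha_{01}=\ker N(s_1)$ and $\operatorname{im}N(s_1)=\operatorname{im}\alpha_{10}=\ker\alpha_{21}=\ker(1-s_1)$. (c) If $\operatorname{im}(1-t_2)=\ker(1-s_2)$ and $\operatorname{im}(1-s_2)=\ker(1-t_2)$, then $\operatorname{im}(1-t_2)=\operatorname{im}\alpha_{20}=\ker\alpha_{12}=\ker(1-s_2)$ and $\operatorname{im}(1-s_2)=\operatorname{im}\alpha_{21}=\ker\alpha_{02}=\ker(1-t_2)$.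
   Context: Fix a prime $p$, $N(x)=1+x+\dots+x^{p-1}$, $\mathfrak{S}=\mathbb{Z}[t]/(t^p-1)$. A $\mathfrak{K}$-module $M$ amounts to $\mathbb{Z}/2$-graded abelian groups $M_0,M_1,M_2$ with homomorphisms $\alpha_{jk}\colon M_k\to M_j$ ($j\neq k$; $\alpha_{12},\alpha_{21}$ grading-reversing, others grading-preserving) with $\alpha_{jk}\alpha_{km}=0$ for $\{j,k,m\}=\{0,1,2\}$ and, for $t_0:=1-\alpha_{02}\alpha_{20}$ on $M_0$, $s_1:=1-\alpha_{12}\alpha_{21}$ on $M_1$, $t_2:=1-\alpha_{20}\alpha_{02}$, $s_2:=1-\alpha_{21}\alpha_{12}$ on $M_2$: $\alpha_{01}\alpha_{10}=N(t_0)$, $\alpha_{10}\alpha_{01}=N(s_1)$, $N(t_2)+N(s_2)=p$. $M$ is exact if the cyclic sequences $M_0\xrightarrow{\alpha_{10}}M_1\xrightarrow{\alpha_{21}}M_2\xrightarrow{\alpha_{02}}M_0$ and $M_0\xrightarrow{\alpha_{20}}M_2\xrightarrow{\alpha_{12}}M_1\xrightarrow{\alpha_{01}}M_0$ are exact. An $\mathfrak{S}$-module $(L,t)$ ($t^p=1$) is cohomologically trivial if $\ker(1-t)=\operatorname{im}N(t)$ and $\operatorname{im}(1-t)=\ker N(t)$. *)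

From HB Require Import structures.
From mathcomp Require Import all_boot all_algebra.
Set Implicit Arguments. Unset Strict Implicit. Unset Printing Implicit Defensive.
Import GRing.Theory.
Local Open Scope ring_scope.

Definition im (U V : Type) (f : U -> V) : V -> Prop := fun y => exists x, f x = y.
Definition ker (U : Type) (V : zmodType) (f : U -> V) : U -> Prop := fun x => f x = 0.
Definition seteq (T : Type) (A B : T -> Prop) : Prop := forall x, A x <-> B x.

Definition Nop (p : nat) (V : zmodType) (t : V -> V) (x : V) : V :=
  \sum_(i < p) iter i t x.
Definition omt (V : zmodType) (t : V -> V) (x : V) : V := x - t x.

Definition coh_trivial (p : nat) (V : zmodType) (t : V -> V) : Prop :=
  seteq (ker (omt t)) (im (Nop p t)) /\ seteq (im (omt t)) (ker (Nop p t)).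

(* A Z/2-graded abelian group is a zmodType M with an idempotent additive
   endomorphism e (projection onto the even part M^even = im e, with
   M^odd = ker e, M = M^even (+) M^odd). *)
Definition graded (M : zmodType) (e : {additive M -> M}) : Prop :=
  forall x, e (e x) = e x.
Definition grad_pres (U V : zmodType) (eU : {additive U -> U}) (eV : {additive V -> V})
  (f : {additive U -> V}) : Prop := forall x, f (eU x) = eV (f x).
Definition grad_rev (U V : zmodType) (eU : {additive U -> U}) (eV : {additive V -> V})
  (f : {additive U -> V}) : Prop := forall x, f (eU x) = f x - eV (f x).

Record Kdata := KData {
  M0 : zmodType; M1 : zmodType; M2 : zmodType;
  e0 : {additive M0 -> M0}; e1 : {additive M1 -> M1}; e2 : {additive M2 -> M2};
  a01 : {additive M1 -> M0}; a10 : {additive M0 -> M1};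
  a02 : {additive M2 -> M0}; a20 : {additive M0 -> M2};
  a12 : {additive M2 -> M1}; a21 : {additive M1 -> M2} }.

Definition t0 (M : Kdata) (x : M0 M) : M0 M := x - a02 M (a20 M x).
Definition s1 (M : Kdata) (x : M1 M) : M1 M := x - a12 M (a21 M x).
Definition t2 (M : Kdata) (x : M2 M) : M2 M := x - a20 M (a02 M x).
Definition s2 (M : Kdata) (x : M2 M) : M2 M := x - a21 M (a12 M x).

Definition is_Kmodule (p : nat) (M : Kdata) : Prop :=
  [/\ (graded (e0 M) /\ graded (e1 M) /\ graded (e2 M)),
      (grad_pres (e1 M) (e0 M) (a01 M) /\ grad_pres (e0 M) (e1 M) (a10 M) /\
       grad_pres (e2 M) (e0 M) (a02 M) /\ grad_pres (e0 M) (e2 M) (a20 M) /\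
       grad_rev (e2 M) (e1 M) (a12 M) /\ grad_rev (e1 M) (e2 M) (a21 M)),
      ((forall x, a01 M (a12 M x) = 0) /\ (forall x, a02 M (a21 M x) = 0) /\
       (forall x, a10 M (a02 M x) = 0) /\ (forall x, a12 M (a20 M x) = 0) /\
       (forall x, a20 M (a01 M x) = 0) /\ (forall x, a21 M (a10 M x) = 0)),
      ((forall x, a01 M (a10 M x) = Nop p (@t0 M) x) /\
       (forall x, a10 M (a01 M x) = Nop p (@s1 M) x))
    & (forall x, Nop p (@t2 M) x + Nop p (@s2 M) x = x *+ p)].

Definition exact_K (M : Kdata) : Prop :=
  [/\ seteq (im (a10 M)) (ker (a21 M)), seteq (im (a21 M)) (ker (a02 M))
    & seteq (im (a02 M)) (ker (a10 M))] /\
  [/\ seteq (im (a20 M)) (ker (a12 M)), seteq (im (a12 M)) (ker (a01 M))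
    & seteq (im (a01 M)) (ker (a20 M))].

From mathcomp Require Import all_boot all_algebra.

Import GRing.Theory.
Local Open Scope ring_scope.

(* Each operator in the statement is a composite of two structure maps:
   N(t0) = a01 a10, 1 - t0 = a02 a20, N(s1) = a10 a01, 1 - s1 = a12 a21,
   1 - t2 = a20 a02 and 1 - s2 = a21 a12.  If A = g f and B = k h with
   im g = ker h, then im A <= im g = ker h <= ker B, and the hypothesis
   ker B <= im A of each part closes the cycle of inclusions; exchanging the
   roles of A and B, with im k = ker f, gives the second chain. *)

Lemma omtE (V : zmodType) (f : V -> V) : omt (fun x => x - f x) =1 f.
Proof. by move=> x; rewrite /omt subKr. Qed.

Lemma factor_chain {U V W : Type} {X Y : zmodType} {f : U -> V} {g : V -> W}
    {h : W -> X} {k : {additive X -> Y}} {A : U -> W} {B : W -> Y} :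
  A =1 g \o f -> B =1 k \o h -> seteq (im g) (ker h) ->
  (forall x, ker B x -> im A x) ->
  seteq (im A) (im g) /\ seteq (im g) (ker h) /\ seteq (ker h) (ker B).
Proof.
move=> AE BE gh BA.
have Ag x : im A x -> im g x by case=> u <-; exists (f u); rewrite AE.
have hB x : ker h x -> ker B x by rewrite /ker BE /= => ->; rewrite raddf0.
split; [|split] => // x; split; first exact: Ag.
- by move=> /gh /hB /BA.
- exact: hB.
- by move=> /BA /Ag /gh.
Qed.

Lemma factor_chain_pair {W V X : zmodType} {f : W -> V} {g : {additive V -> W}}
    {h : W -> X} {k : {additive X -> W}} {A B : W -> W} :
  A =1 g \o f -> B =1 k \o h -> seteq (im g) (ker h) -> seteq (im k) (ker f) ->
  (forall x, ker B x -> im A x) -> (forall x, ker A x -> im B x) ->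
  (seteq (im A) (im g) /\ seteq (im g) (ker h) /\ seteq (ker h) (ker B)) /\
  (seteq (im B) (im k) /\ seteq (im k) (ker f) /\ seteq (ker f) (ker A)).
Proof.
move=> AE BE gh kf BA AB.
by split; [exact: factor_chain AE BE gh BA | exact: factor_chain BE AE kf AB].
Qed.

Theorem proposition7p3 (p : nat) (M : Kdata) :
  prime p -> is_Kmodule p M -> exact_K M ->
  (* (a) *)
  (coh_trivial p (@t0 M) ->
     (seteq (im (Nop p (@t0 M))) (im (a01 M)) /\
      seteq (im (a01 M)) (ker (a20 M)) /\
      seteq (ker (a20 M)) (ker (omt (@t0 M)))) /\
     (seteq (im (omt (@t0 M))) (im (a02 M)) /\
      seteq (im (a02 M)) (ker (a10 M)) /\
      seteq (ker (a10 M)) (ker (Nop p (@t0 M))))) /\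
  (* (b) *)
  (coh_trivial p (@s1 M) ->
     (seteq (im (omt (@s1 M))) (im (a12 M)) /\
      seteq (im (a12 M)) (ker (a01 M)) /\
      seteq (ker (a01 M)) (ker (Nop p (@s1 M)))) /\
     (seteq (im (Nop p (@s1 M))) (im (a10 M)) /\
      seteq (im (a10 M)) (ker (a21 M)) /\
      seteq (ker (a21 M)) (ker (omt (@s1 M))))) /\
  (* (c) *)
  (seteq (im (omt (@t2 M))) (ker (omt (@s2 M))) ->
   seteq (im (omt (@s2 M))) (ker (omt (@t2 M))) ->
     (seteq (im (omt (@t2 M))) (im (a20 M)) /\
      seteq (im (a20 M)) (ker (a12 M)) /\
      seteq (ker (a12 M)) (ker (omt (@s2 M)))) /\
     (seteq (im (omt (@s2 M))) (im (a21 M)) /\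
      seteq (im (a21 M)) (ker (a02 M)) /\
      seteq (ker (a02 M)) (ker (omt (@t2 M))))).
Proof.
move=> _ [_ _ _ [N0 N1] _] [[im10 im21 im02] [im20 im12 im01]].
split; [|split].
- case=> kerN imN; apply: factor_chain_pair (fsym N0) (omtE _ _) im01 im02 _ _.
  + by move=> x /kerN.
  + by move=> x /imN.
- case=> kerN imN; apply: factor_chain_pair (omtE _ _) (fsym N1) im12 im10 _ _.
  + by move=> x /imN.
  + by move=> x /kerN.
- move=> imt ims; apply: factor_chain_pair (omtE _ _) (omtE _ _) im20 im21 _ _.
  + by move=> x /imt.
  + by move=> x /ims.
Qed.
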